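(* For all real $y\ge x\ge0$, $$\lim_{n\to\infty}\frac{\log p([y\log n]+1,[x\log n])}{\log n}=\lim_{n\to\infty}\frac{\log p_1([y\log n],[x\log n])}{\log n}=\lim_{n\to\infty}\frac{\log p_{-1}([y\log n]+1,[x\log n]+1)}{\log n}=-g(x,y).$$
   Context: Let $0<q<p<1$ with $p+q=1$. Define, for integers: $p(L,K)=\binom{L-1}{K}(2p)^Kq^{L-1}p(1-2q)$ for $K\ge0$, $L\ge K+1$; $p_{-1}(L,K)=\binom{L}{K}(2p)^{K-1}q^{L-1}p^2(1-2q)$ for $K\ge1$, $L\ge K$; $p_1(L,K)=\binom{L}{K}(2p)^{K-1}q^{L}p(1-2q)$ for $K\ge1$, $L\ge K$, and $p_1(L,0)=q^L(1-2q)$ for $L\ge0$. Let $g(x,y)=x\log x-y\log y+(y-x)\log(y-x)-x\log(2p)-y\log q$ with the convention $0\log0=0$. $[\cdot]$ denotes the integer part. *)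

From Stdlib Require Import Reals ZArith.
From Coquelicot Require Export Coquelicot.
Open Scope R_scope.

Fixpoint binom (n k : nat) : nat :=
  match n, k with
  | _, O => 1%nat
  | O, S _ => 0%nat
  | S n', S k' => (binom n' k' + binom n' k)%nat
  end.

Definition pLK (p q : R) (L K : nat) : R :=
  INR (binom (L - 1) K) * (2 * p) ^ K * q ^ (L - 1) * p * (1 - 2 * q).

Definition pm1LK (p q : R) (L K : nat) : R :=
  INR (binom L K) * (2 * p) ^ (K - 1) * q ^ (L - 1) * p ^ 2 * (1 - 2 * q).

Definition p1LK (p q : R) (L K : nat) : R :=
  match K with
  | O => q ^ L * (1 - 2 * q)
  | S _ => INR (binom L K) * (2 * p) ^ (K - 1) * q ^ L * p * (1 - 2 * q)
  end.

Definition xlogx (t : R) : R := if Req_EM_T t 0 then 0 else t * ln t.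

Definition gfun (p q x y : R) : R :=
  xlogx x - xlogx y + xlogx (y - x) - x * ln (2 * p) - y * ln q.

Definition ipart (t : R) : nat := Z.to_nat (Int_part t).

From Stdlib Require Import Reals Lra Lia Psatz ZArith.
From Coquelicot Require Import Coquelicot.
Open Scope R_scope.

(* Up to a bounded additive term, each of the three logarithms equals
   ln C(L,K) + K ln(2p) + L ln q with L = y ln n + O(1) and K = x ln n + O(1).
   The crude Stirling bound ln N! = N ln N - N + O(ln N) gives
   ln C(L,K) = L ln L - K ln K - (L-K) ln(L-K) + O(ln L).  This entropy expression
   is homogeneous of degree one, so divided by ln n it becomes the same expression
   in L/ln n -> y and K/ln n -> x, and continuity of t ln t on [0, oo) gives -g(x,y). *)

Lemma ln_le_sub1 v : 0 < v -> ln v <= v - 1.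
Proof.
  intros hv. rewrite <- (exp_ln v) at 2 by exact hv.
  pose proof (exp_ineq1_le (ln v)). lra.
Qed.

(* Includes n = 0: Stdlib's ln is 0 on (-oo, 0]. *)
Lemma ln_INR_nonneg n : 0 <= ln (INR n).
Proof.
  destruct n as [|n].
  - simpl. unfold ln. destruct (Rlt_dec 0 0) as [h|_]; [exfalso; lra|lra].
  - rewrite <- ln_1. apply ln_le; [lra|]. apply (le_INR 1); lia.
Qed.

Lemma xlogxE r : xlogx r = r * ln r.
Proof. unfold xlogx. destruct (Req_EM_T r 0) as [->|]; [ring|reflexivity]. Qed.

(* Because ln is 0 on (-oo, 0], xlogx vanishes there, which makes it continuous at 0
   from both sides. *)
Lemma xlogx_nonpos r : r <= 0 -> xlogx r = 0.
Proof.
  intros hr. rewrite xlogxE. unfold ln. destruct (Rlt_dec 0 r); [exfalso; lra|ring].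
Qed.

Lemma xlogx_div r t : 0 <= r -> 0 < t -> xlogx (r / t) = xlogx r / t - r / t * ln t.
Proof.
  intros hr ht. rewrite !xlogxE. destruct (Req_dec r 0) as [->|hne].
  - unfold Rdiv. ring.
  - rewrite ln_div by lra. field. lra.
Qed.

Lemma xlogx_succ_sub_bounds r : 0 < r ->
  ln r + 1 <= xlogx (r + 1) - xlogx r <= ln (r + 1) + 1.
Proof.
  intros hr. rewrite !xlogxE.
  assert (hup : ln ((r + 1) / r) <= (r + 1) / r - 1) by (apply ln_le_sub1, Rdiv_lt_0_compat; lra).
  assert (hlo : ln (r / (r + 1)) <= r / (r + 1) - 1) by (apply ln_le_sub1, Rdiv_lt_0_compat; lra).
  rewrite ln_div in hup, hlo by lra.
  replace ((r + 1) / r - 1) with (/ r) in hup by (field; lra).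
  replace (r / (r + 1) - 1) with (- / (r + 1)) in hlo by (field; lra).
  apply (Rmult_le_compat_l r) in hup; [|lra].
  apply (Rmult_le_compat_l (r + 1)) in hlo; [|lra].
  rewrite Rinv_r in hup by lra.
  replace ((r + 1) * - / (r + 1)) with (-1) in hlo by (field; lra).
  split; nra.
Qed.

Lemma ln_fact_succ_bounds N :
  xlogx (INR (S N)) - INR (S N) + 1 <= ln (INR (fact (S N)))
  <= xlogx (INR (S N)) - INR (S N) + 1 + ln (INR (S N)).
Proof.
  induction N as [|N IH].
  - simpl. rewrite xlogxE, ln_1. lra.
  - rewrite fact_simpl, mult_INR, ln_mult by (apply lt_0_INR; first [lia | apply lt_O_fact]).
    rewrite (S_INR (S N)) in *.
    assert (hN : 0 < INR (S N)) by (apply lt_0_INR; lia).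
    pose proof (xlogx_succ_sub_bounds _ hN).
    assert (ln (INR (S N)) <= ln (INR (S N) + 1)) by (apply ln_le; lra).
    lra.
Qed.

Lemma Rabs_ln_fact_sub N :
  Rabs (ln (INR (fact N)) - (xlogx (INR N) - INR N)) <= 1 + ln (INR N + 1).
Proof.
  destruct N as [|N].
  - simpl. rewrite xlogxE, ln_1, Rplus_0_l, ln_1. apply Rabs_le. lra.
  - pose proof (ln_fact_succ_bounds N).
    assert (0 <= ln (INR (S N))) by apply ln_INR_nonneg.
    assert (ln (INR (S N)) <= ln (INR (S N) + 1)) by (apply ln_le; [apply lt_0_INR; lia|lra]).
    apply Rabs_le. lra.
Qed.

Lemma binom_gt n k : (n < k)%nat -> binom n k = 0%nat.
Proof.
  revert k; induction n as [|n IH]; intros [|k] h; simpl; try lia; auto.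
  rewrite !IH by lia. reflexivity.
Qed.

Lemma binom_C n k : (k <= n)%nat -> INR (binom n k) = Binomial.C n k.
Proof.
  revert k; induction n as [|n IH]; intros [|k] h; simpl binom.
  - rewrite C_n_0. reflexivity.
  - lia.
  - rewrite C_n_0. reflexivity.
  - rewrite plus_INR. destruct (Nat.eq_dec k n) as [->|hne].
    + rewrite (binom_gt n (S n)), IH, !C_n_n by lia. simpl. ring.
    + rewrite !IH by lia. apply pascal. lia.
Qed.

Lemma binom_pos n k : (k <= n)%nat -> 0 < INR (binom n k).
Proof.
  revert k; induction n as [|n IH]; intros [|k] h; simpl binom; try lia; try (simpl; lra).
  rewrite plus_INR. pose proof (IH k ltac:(lia)). pose proof (pos_INR (binom n (S k))). lra.
Qed.

Definition binom_entropy (l k : R) : R := xlogx l - xlogx k - xlogx (l - k).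

Lemma binom_entropy_div l k t : 0 <= k <= l -> 0 < t ->
  binom_entropy (l / t) (k / t) = binom_entropy l k / t.
Proof.
  intros hkl ht. unfold binom_entropy.
  replace (l / t - k / t) with ((l - k) / t) by (field; lra).
  rewrite !xlogx_div by lra. field. lra.
Qed.

Lemma Rabs_ln_binom_sub n k : (k <= n)%nat ->
  Rabs (ln (INR (binom n k)) - binom_entropy (INR n) (INR k)) <= 3 + 3 * ln (INR n + 1).
Proof.
  intros hkn. rewrite binom_C by exact hkn. unfold Binomial.C.
  assert (hfact : forall N, 0 < INR (fact N)) by (intros; apply lt_0_INR, lt_O_fact).
  rewrite ln_div, ln_mult by (try apply Rmult_lt_0_compat; apply hfact).
  pose proof (Rabs_ln_fact_sub n) as hn.
  pose proof (Rabs_ln_fact_sub k) as hk.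
  pose proof (Rabs_ln_fact_sub (n - k)) as hnk.
  rewrite minus_INR in hnk by exact hkn.
  apply le_INR in hkn. pose proof (pos_INR k).
  assert (ln (INR k + 1) <= ln (INR n + 1)) by (apply ln_le; lra).
  assert (ln (INR n - INR k + 1) <= ln (INR n + 1)) by (apply ln_le; lra).
  unfold binom_entropy.
  apply Rabs_le_between in hn, hk, hnk. apply Rabs_le. lra.
Qed.

Lemma Rabs_xlogx_le_sqrt s : 0 <= s <= 1 -> Rabs (xlogx s) <= 2 * sqrt s.
Proof.
  intros hs. destruct (Req_dec s 0) as [->|hne].
  { rewrite xlogx_nonpos, Rabs_R0, sqrt_0 by lra. lra. }
  rewrite xlogxE.
  assert (hsqrt : 0 < sqrt s) by (apply sqrt_lt_R0; lra).
  assert (hsq : sqrt s * sqrt s = s) by (apply sqrt_sqrt; lra).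
  assert (hln : ln s <= 0) by (rewrite <- ln_1; apply ln_le; lra).
  (* s (- ln s) = 2 s ln (1 / sqrt s) <= 2 s / sqrt s = 2 sqrt s *)
  assert (hinv : ln (/ sqrt s) <= / sqrt s - 1) by (apply ln_le_sub1, Rinv_0_lt_compat; lra).
  rewrite ln_Rinv in hinv by lra.
  assert (hln2 : ln s = 2 * ln (sqrt s)) by (rewrite <- hsq at 1; rewrite ln_mult by lra; ring).
  assert (hmul : s * - ln (sqrt s) <= s * / sqrt s) by (apply Rmult_le_compat_l; lra).
  replace (s * / sqrt s) with (sqrt s) in hmul by (rewrite <- hsq at 2; field; lra).
  rewrite Rabs_left1, hln2 by nra. lra.
Qed.

Lemma continuity_pt_xlogx r : 0 <= r -> continuity_pt xlogx r.
Proof.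
  intros hr. destruct (Req_dec r 0) as [->|hne].
  - intros eps heps. exists (Rmin 1 ((eps / 2) ^ 2)).
    split; [apply Rmin_pos; [lra|apply pow_lt; lra]|].
    intros s [_ hs].
    change (Rabs (s - 0) < Rmin 1 ((eps / 2) ^ 2)) in hs.
    change (Rabs (xlogx s - xlogx 0) < eps).
    rewrite Rminus_0_r in hs. rewrite (xlogx_nonpos 0), Rminus_0_r by lra.
    apply Rabs_lt_between in hs. destruct hs as [_ hs].
    pose proof (Rmin_l 1 ((eps / 2) ^ 2)). pose proof (Rmin_r 1 ((eps / 2) ^ 2)).
    destruct (Rle_dec s 0) as [hs0|hs0].
    { rewrite xlogx_nonpos, Rabs_R0 by exact hs0. exact heps. }
    assert (hsqrt : sqrt s < eps / 2).
    { rewrite <- (sqrt_pow2 (eps / 2)) by lra. apply sqrt_lt_1_alt. split; lra. }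
    pose proof (Rabs_xlogx_le_sqrt s ltac:(split; lra)). lra.
  - apply continuity_pt_ext with (f := fun s => s * ln s); [intros; symmetry; apply xlogxE|].
    apply continuity_pt_mult; [apply continuity_pt_id|].
    apply continuity_pt_filterlim, continuous_ln. lra.
Qed.

Lemma is_lim_seq_eventually_ge (t : nat -> R) (M : R) :
  is_lim_seq t p_infty -> eventually (fun n => M <= t n).
Proof.
  intros ht. apply is_lim_seq_spec in ht. destruct (ht M) as [N hN].
  exists N. intros n hn. left. exact (hN n hn).
Qed.

Lemma is_lim_seq_ln_div (t : nat -> R) :
  is_lim_seq t p_infty -> is_lim_seq (fun n => ln (t n) / t n) 0.
Proof.
  intros ht. apply (is_lim_comp_seq (fun r => ln r / r) t p_infty 0); [exact is_lim_div_ln_p| |exact ht].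
  exists 0%nat. intros. discriminate.
Qed.

Lemma is_lim_seq_div_O_ln (t w : nat -> R) (c d : R) :
  is_lim_seq t p_infty -> eventually (fun n => Rabs (w n) <= c + d * ln (t n)) ->
  is_lim_seq (fun n => w n / t n) 0.
Proof.
  intros ht hw. apply is_lim_seq_abs_0.
  apply is_lim_seq_le_le_loc with (u := fun _ => 0) (w := fun n => c * / t n + d * (ln (t n) / t n)).
  - generalize (filter_and _ _ hw (is_lim_seq_eventually_ge t 1 ht)).
    apply filter_imp. intros n [hwn htn]. split; [apply Rabs_pos|].
    unfold Rdiv. rewrite Rabs_mult, Rabs_inv, (Rabs_pos_eq (t n)) by lra.
    replace (c * / t n + d * (ln (t n) * / t n)) with ((c + d * ln (t n)) * / t n) by ring.
    apply Rmult_le_compat_r; [left; apply Rinv_0_lt_compat; lra|exact hwn].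
  - apply is_lim_seq_const.
  - replace (Finite 0) with (Finite (c * 0 + d * 0)) by (f_equal; ring).
    apply is_lim_seq_plus'; apply is_lim_seq_mult'; try apply is_lim_seq_const.
    + replace (Finite 0) with (Rbar_inv p_infty) by reflexivity.
      apply is_lim_seq_inv; [exact ht|discriminate].
    + exact (is_lim_seq_ln_div t ht).
Qed.

Lemma is_lim_seq_ratio (t u : nat -> R) (y c : R) :
  is_lim_seq t p_infty -> eventually (fun n => Rabs (u n - y * t n) <= c) ->
  is_lim_seq (fun n => u n / t n) y.
Proof.
  intros ht hu.
  assert (herror : is_lim_seq (fun n => (u n - y * t n) / t n) 0).
  { apply (is_lim_seq_div_O_ln _ _ c 0 ht). revert hu. apply filter_imp.
    intros n hn. lra. }
  apply is_lim_seq_ext_loc with (u := fun n => y + (u n - y * t n) / t n).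
  - generalize (is_lim_seq_eventually_ge t 1 ht). apply filter_imp.
    intros n hn. field. lra.
  - replace (Finite y) with (Finite (y + 0)) by (f_equal; ring).
    apply is_lim_seq_plus'; [apply is_lim_seq_const|exact herror].
Qed.

Lemma is_lim_seq_ln_binom (t : nat -> R) (L K : nat -> nat) (x y c : R) :
  0 <= x <= y -> is_lim_seq t p_infty ->
  eventually (fun n => Rabs (INR (L n) - y * t n) <= c) ->
  eventually (fun n => Rabs (INR (K n) - x * t n) <= c) ->
  eventually (fun n => (K n <= L n)%nat) ->
  is_lim_seq (fun n => ln (INR (binom (L n) (K n))) / t n) (binom_entropy y x).
Proof.
  intros hxy ht hL hK hKL.
  assert (hLy := is_lim_seq_ratio _ _ _ _ ht hL).
  assert (hKx := is_lim_seq_ratio _ _ _ _ ht hK).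
  assert (hentropy : is_lim_seq (fun n => binom_entropy (INR (L n) / t n) (INR (K n) / t n))
                       (binom_entropy y x)).
  { assert (hdiff := is_lim_seq_minus' _ _ _ _ hLy hKx).
    unfold binom_entropy.
    apply is_lim_seq_minus'; [apply is_lim_seq_minus'|];
      apply is_lim_seq_continuous; auto; apply continuity_pt_xlogx; lra. }
  assert (herror : is_lim_seq (fun n => (ln (INR (binom (L n) (K n)))
                     - binom_entropy (INR (L n)) (INR (K n))) / t n) 0).
  { apply (is_lim_seq_div_O_ln _ _ (3 + 3 * ln (Rabs y + c + 1)) 3 ht).
    generalize (filter_and _ _ (filter_and _ _ hL hKL) (is_lim_seq_eventually_ge _ 1 ht)).
    apply filter_imp. intros n [hLKn htn]. destruct hLKn as [hLn hKLn].
    pose proof (Rabs_ln_binom_sub _ _ hKLn).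
    assert (hc : 0 <= c) by (eapply Rle_trans; [apply Rabs_pos|exact hLn]).
    assert (hLt : INR (L n) + 1 <= (Rabs y + c + 1) * t n).
    { pose proof (Rle_abs y). pose proof (Rabs_pos y). apply Rabs_le_between in hLn. nra. }
    assert (ln (INR (L n) + 1) <= ln (Rabs y + c + 1) + ln (t n)).
    { rewrite <- ln_mult by (pose proof (Rabs_pos y); lra).
      apply ln_le; [pose proof (pos_INR (L n)); lra|exact hLt]. }
    lra. }
  apply is_lim_seq_ext_loc with (u := fun n => binom_entropy (INR (L n) / t n) (INR (K n) / t n)
    + (ln (INR (binom (L n) (K n))) - binom_entropy (INR (L n)) (INR (K n))) / t n).
  - generalize (filter_and _ _ hKL (is_lim_seq_eventually_ge _ 1 ht)).
    apply filter_imp. intros n [hKLn htn]. apply le_INR in hKLn.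
    pose proof (pos_INR (K n)).
    rewrite binom_entropy_div by (try split; lra). field. lra.
  - replace (Finite (binom_entropy y x)) with (Finite (binom_entropy y x + 0)) by (f_equal; ring).
    apply is_lim_seq_plus'; assumption.
Qed.

Lemma is_lim_seq_ln_binom_weighted (t V : nat -> R) (L K : nat -> nat) (x y a b c d : R) :
  0 <= x <= y -> is_lim_seq t p_infty ->
  eventually (fun n => Rabs (INR (L n) - y * t n) <= c) ->
  eventually (fun n => Rabs (INR (K n) - x * t n) <= c) ->
  eventually (fun n => (K n <= L n)%nat) ->
  eventually (fun n =>
    Rabs (V n - (ln (INR (binom (L n) (K n))) + INR (K n) * a + INR (L n) * b)) <= d) ->
  is_lim_seq (fun n => V n / t n) (binom_entropy y x + x * a + y * b).
Proof.
  intros hxy ht hL hK hKL hV.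
  assert (herror : is_lim_seq (fun n =>
    (V n - (ln (INR (binom (L n) (K n))) + INR (K n) * a + INR (L n) * b)) / t n) 0).
  { apply (is_lim_seq_div_O_ln _ _ d 0 ht). revert hV. apply filter_imp. intros n hn. lra. }
  apply is_lim_seq_ext_loc with (u := fun n => ln (INR (binom (L n) (K n))) / t n
    + INR (K n) / t n * a + INR (L n) / t n * b
    + (V n - (ln (INR (binom (L n) (K n))) + INR (K n) * a + INR (L n) * b)) / t n).
  - generalize (is_lim_seq_eventually_ge _ 1 ht). apply filter_imp.
    intros n hn. field. lra.
  - replace (Finite (binom_entropy y x + x * a + y * b))
      with (Finite (binom_entropy y x + x * a + y * b + 0)) by (f_equal; ring).
    apply is_lim_seq_plus'; [|exact herror].
    apply is_lim_seq_plus'; [apply is_lim_seq_plus'|];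
      try (apply is_lim_seq_mult'; [|apply is_lim_seq_const]);
      eauto using is_lim_seq_ln_binom, is_lim_seq_ratio.
Qed.

Lemma ln_binom_pow_mult (a b c : R) (L K : nat) :
  0 < a -> 0 < b -> 0 < c -> (K <= L)%nat ->
  ln (INR (binom L K) * a ^ K * b ^ L * c)
  = ln (INR (binom L K)) + INR K * ln a + INR L * ln b + ln c.
Proof.
  intros ha hb hc hKL. pose proof (binom_pos _ _ hKL).
  rewrite !ln_mult, !ln_pow by (repeat apply Rmult_lt_0_compat; try apply pow_lt; lra).
  ring.
Qed.

Section LogProbabilities.

Variables p q : R.
Hypotheses (hp : 0 < p) (hq : 0 < q) (h2q : 0 < 1 - 2 * q).

Lemma ln_pLK_succ L K : (K <= L)%nat ->
  ln (pLK p q (L + 1) K) = ln (INR (binom L K)) + INR K * ln (2 * p) + INR L * ln q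
                           + ln (p * (1 - 2 * q)).
Proof.
  intros hKL. unfold pLK. rewrite Nat.add_sub.
  rewrite <- ln_binom_pow_mult by (assumption || lra || (apply Rmult_lt_0_compat; lra)).
  f_equal. ring.
Qed.

Lemma ln_pm1LK_succ L K : (K <= L)%nat ->
  ln (pm1LK p q (L + 1) (K + 1))
  = ln (INR (binom (L + 1) (K + 1))) + INR (K + 1) * ln (2 * p) + INR (L + 1) * ln q
    + ln (p * (1 - 2 * q) / (2 * q)).
Proof.
  intros hKL. unfold pm1LK. rewrite !Nat.add_sub.
  rewrite <- ln_binom_pow_mult
    by (try apply Rdiv_lt_0_compat; try apply Rmult_lt_0_compat; lra || lia).
  f_equal. rewrite !pow_add. field. lra.
Qed.

Lemma Rabs_ln_p1LK_sub L K : (K <= L)%nat ->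
  Rabs (ln (p1LK p q L K) - (ln (INR (binom L K)) + INR K * ln (2 * p) + INR L * ln q))
  <= Rabs (ln (1 - 2 * q)) + Rabs (ln ((1 - 2 * q) / 2)).
Proof.
  intros hKL. pose proof (Rabs_pos (ln (1 - 2 * q))). pose proof (Rabs_pos (ln ((1 - 2 * q) / 2))).
  destruct K as [|K]; unfold p1LK.
  - replace (q ^ L * (1 - 2 * q)) with (INR (binom L 0) * (2 * p) ^ 0 * q ^ L * (1 - 2 * q))
      by (destruct L; simpl; ring).
    rewrite ln_binom_pow_mult by (lra || lia).
    replace (_ - _) with (ln (1 - 2 * q)) by ring. lra.
  - replace (INR (binom L (S K)) * (2 * p) ^ (S K - 1) * q ^ L * p * (1 - 2 * q))
      with (INR (binom L (S K)) * (2 * p) ^ S K * q ^ L * ((1 - 2 * q) / 2))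
      by (simpl; rewrite Nat.sub_0_r; field; lra).
    rewrite ln_binom_pow_mult by (assumption || lra || (apply Rdiv_lt_0_compat; lra)).
    replace (_ - _) with (ln ((1 - 2 * q) / 2)) by ring. lra.
Qed.

End LogProbabilities.

Lemma ipart_spec s : 0 <= s -> INR (ipart s) <= s < INR (ipart s) + 1.
Proof.
  intros hs. destruct (base_Int_part s) as [h1 h2].
  assert (hz : (0 <= Int_part s)%Z).
  { assert (h : -1 < IZR (Int_part s)) by lra. apply lt_IZR in h. lia. }
  unfold ipart. rewrite INR_IZR_INZ, Z2Nat.id by exact hz. lra.
Qed.

Lemma Rabs_ipart_sub s : 0 <= s -> Rabs (INR (ipart s) - s) <= 1.
Proof. intros hs. apply ipart_spec in hs. apply Rabs_le. lra. Qed.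

Lemma Rabs_ipart_succ_sub s : 0 <= s -> Rabs (INR (ipart s + 1) - s) <= 1.
Proof. intros hs. apply ipart_spec in hs. rewrite plus_INR. apply Rabs_le. simpl. lra. Qed.

Lemma ipart_le s s' : 0 <= s <= s' -> (ipart s <= ipart s')%nat.
Proof.
  intros hs. pose proof (ipart_spec s ltac:(lra)). pose proof (ipart_spec s' ltac:(lra)).
  assert (h : INR (ipart s) < INR (ipart s' + 1)) by (rewrite plus_INR; simpl; lra).
  apply INR_lt in h. lia.
Qed.

Lemma is_lim_seq_ln_INR : is_lim_seq (fun n => ln (INR n)) p_infty.
Proof.
  apply (is_lim_comp_seq ln INR p_infty p_infty); [exact is_lim_ln_p| |exact is_lim_seq_INR].
  exists 0%nat. intros. discriminate.
Qed.

Theorem lemma6p1 (p q x y : R)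
  (hq : 0 < q) (hqp : q < p) (hp1 : p < 1) (hpq : p + q = 1)
  (hx : 0 <= x) (hxy : x <= y) :
  is_lim_seq (fun n : nat =>
      ln (pLK p q (ipart (y * ln (INR n)) + 1) (ipart (x * ln (INR n))))
      / ln (INR n)) (- gfun p q x y) /\
  is_lim_seq (fun n : nat =>
      ln (p1LK p q (ipart (y * ln (INR n))) (ipart (x * ln (INR n))))
      / ln (INR n)) (- gfun p q x y) /\
  is_lim_seq (fun n : nat =>
      ln (pm1LK p q (ipart (y * ln (INR n)) + 1) (ipart (x * ln (INR n)) + 1))
      / ln (INR n)) (- gfun p q x y).
Proof.
  assert (hp : 0 < p) by lra. assert (h2q : 0 < 1 - 2 * q) by lra.
  replace (- gfun p q x y) with (binom_entropy y x + x * ln (2 * p) + y * ln q)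
    by (unfold gfun, binom_entropy; ring).
  set (L n := ipart (y * ln (INR n))). set (K n := ipart (x * ln (INR n))).
  assert (hlog : forall z n, 0 <= z -> 0 <= z * ln (INR n))
    by (intros; apply Rmult_le_pos; [assumption|apply ln_INR_nonneg]).
  assert (hL : forall n, Rabs (INR (L n) - y * ln (INR n)) <= 1)
    by (intros; apply Rabs_ipart_sub, hlog; lra).
  assert (hK : forall n, Rabs (INR (K n) - x * ln (INR n)) <= 1)
    by (intros; apply Rabs_ipart_sub, hlog; lra).
  assert (hKL : forall n, (K n <= L n)%nat).
  { intros n. apply ipart_le. split; [apply hlog; lra|].
    apply Rmult_le_compat_r; [apply ln_INR_nonneg|lra]. }
  split; [|split].
  - apply (is_lim_seq_ln_binom_weighted _ _ L K _ _ _ _ 1 (Rabs (ln (p * (1 - 2 * q)))));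
      try (split; lra); try exact is_lim_seq_ln_INR; apply filter_forall; auto.
    intros n. rewrite ln_pLK_succ by (apply hKL || lra). unfold L, K.
    replace (_ - _) with (ln (p * (1 - 2 * q))) by ring.
    apply Rle_refl.
  - apply (is_lim_seq_ln_binom_weighted _ _ L K _ _ _ _ 1
      (Rabs (ln (1 - 2 * q)) + Rabs (ln ((1 - 2 * q) / 2))));
      try (split; lra); try exact is_lim_seq_ln_INR; apply filter_forall; auto.
    intros n. apply Rabs_ln_p1LK_sub; (apply hKL || lra).
  - apply (is_lim_seq_ln_binom_weighted _ _ (fun n => L n + 1)%nat (fun n => K n + 1)%nat
      _ _ _ _ 1 (Rabs (ln (p * (1 - 2 * q) / (2 * q)))));
      try (split; lra); try exact is_lim_seq_ln_INR; apply filter_forall.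
    + intros n. apply Rabs_ipart_succ_sub, hlog. lra.
    + intros n. apply Rabs_ipart_succ_sub, hlog. lra.
    + intros n. specialize (hKL n). lia.
    + intros n. rewrite ln_pm1LK_succ by (apply hKL || lra). unfold L, K.
      replace (_ - _) with (ln (p * (1 - 2 * q) / (2 * q))) by ring. apply Rle_refl.
Qed.
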